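(* Every embeddable graph is 4-colourable (in the usual sense of proper vertex colouring).
   Context: Let $\mathbb{H}^2=\{(x,y,z)\in\mathbb{R}^3 : x^2+y^2+z^2=1,\ z>0\}$ be the open northern hemisphere. A vector system is a finite subset of $\mathbb{H}^2$. A finite simple undirected graph $H=(V,E)$ is embeddable if there is an injective map $f:V\to\mathbb{H}^2$ such that $f(u)\cdot f(v)=0$ for every edge $\{u,v\}\in E$ (non-adjacent vertices may or may not be sent to orthogonal vectors, but distinct vertices must go to distinct vectors). *)

From Stdlib Require Import Reals.
From mathcomp Require Import all_boot.

Set Implicit Arguments.
Unset Strict Implicit.
Unset Printing Implicit Defensive.

Definition point3 : Type := (R * R * R)%type.

Definition dot3 (p q : point3) : R :=
  let '(x1, y1, z1) := p in
  let '(x2, y2, z2) := q in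
  Rplus (Rplus (Rmult x1 x2) (Rmult y1 y2)) (Rmult z1 z2).

Definition in_hemisphere (p : point3) : Prop :=
  let '(x, y, z) := p in
  Rplus (Rplus (Rmult x x) (Rmult y y)) (Rmult z z) = R1 /\ Rlt R0 z.

Definition simple_graph (V : finType) (adj : rel V) : Prop :=
  symmetric adj /\ irreflexive adj.

Definition embeddable (V : finType) (adj : rel V) : Prop :=
  exists f : V -> point3,
    (forall v, in_hemisphere (f v)) /\
    injective f /\
    (forall u v, adj u v -> dot3 (f u) (f v) = R0).

Definition colourable (k : nat) (V : finType) (adj : rel V) : Prop :=
  exists c : V -> 'I_k, forall u v, adj u v -> c u <> c v.

From Stdlib Require Import Reals Lra.
From mathcomp Require Import all_boot.

Set Implicit Arguments.
Unset Strict Implicit.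
Unset Printing Implicit Defensive.

Local Open Scope R_scope.

(* Colour a point (x, y, z) of the upper half-space by the
   quadrant of its projection (x, y) onto the equatorial plane, i.e. by the
   pair of signs of x and y: four colours.  If two points p, q with z > 0 get
   the same colour then x1 x2 >= 0 and y1 y2 >= 0, while z1 z2 > 0, so their
   dot product is strictly positive and they cannot be orthogonal.  Hence,
   composing an embedding f with the quadrant colouring gives a proper
   4-colouring: adjacent vertices are sent to orthogonal vectors, which must
   lie in different quadrants. *)

Definition sign_bit (t : R) : nat := if Rle_dec 0 t then 0%N else 1%N.

Lemma sign_bit_eq_mul_ge0 (a b : R) :
  sign_bit a = sign_bit b -> 0 <= a * b.
Proof.
by rewrite /sign_bit; case: (Rle_dec 0 a); case: (Rle_dec 0 b) => // ? ? _; nra.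
Qed.

Definition quadrant_code (p : point3) : nat :=
  let '(x, y, _) := p in (sign_bit x + 2 * sign_bit y)%N.

Lemma quadrant_code_lt4 (p : point3) : (quadrant_code p < 4)%N.
Proof.
case: p => [[x y] z]; rewrite /quadrant_code /sign_bit.
by case: (Rle_dec 0 x); case: (Rle_dec 0 y).
Qed.

Definition quadrant (p : point3) : 'I_4 := Ordinal (quadrant_code_lt4 p).

Lemma quadrant_eq (x1 y1 z1 x2 y2 z2 : R) :
  quadrant (x1, y1, z1) = quadrant (x2, y2, z2) ->
  sign_bit x1 = sign_bit x2 /\ sign_bit y1 = sign_bit y2.
Proof.
move/(congr1 val); rewrite /= /sign_bit.
by case: (Rle_dec 0 x1); case: (Rle_dec 0 x2); case: (Rle_dec 0 y1); case: (Rle_dec 0 y2).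
Qed.

Lemma same_quadrant_dot3_pos (p q : point3) :
  0 < p.2 -> 0 < q.2 -> quadrant p = quadrant q -> 0 < dot3 p q.
Proof.
case: p => [[x1 y1] z1]; case: q => [[x2 y2] z2] /= hz1 hz2 /quadrant_eq [hx hy].
have hxx := sign_bit_eq_mul_ge0 hx; have hyy := sign_bit_eq_mul_ge0 hy.
have hzz : 0 < z1 * z2 by apply: Rmult_lt_0_compat.
lra.
Qed.

Lemma in_hemisphere_z_pos (p : point3) : in_hemisphere p -> 0 < p.2.
Proof. by case: p => [[x y] z] []. Qed.

Theorem mainTheorem1 (V : finType) (adj : rel V) :
  simple_graph adj -> embeddable adj -> colourable 4 adj.
Proof.
move=> _ [f [f_hemi [_ f_orth]]].
exists (fun v => quadrant (f v)) => u v uv same.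
have := same_quadrant_dot3_pos (in_hemisphere_z_pos (f_hemi u))
          (in_hemisphere_z_pos (f_hemi v)) same.
rewrite (f_orth u v uv); exact: Rlt_irrefl.
Qed.
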